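(* Let $k\ge 3$, let $s_1,\dots,s_{k-1}$ be reals, and let $n=k$. If $x=(x_1,\dots,x_k)\in S_k$ is a local maximum of $x\mapsto\sum_{i=1}^k x_i^k$ on $S_k$, then there exists an integer $i$ with $1\le 2i<2i+1\le k$ and $x_{2i}=x_{2i+1}$. If $x\in S_k$ is a local minimum of this function on $S_k$, then there exists an integer $i$ with $1\le 2i-1<2i\le k$ and $x_{2i-1}=x_{2i}$.
   Context: For integers $k\ge 3$, $n\ge k$ and reals $s_1,\dots,s_{k-1}$, $S_k:=\{(x_1,\dots,x_n)\in\mathbb{R}^n : x_1\ge x_2\ge\cdots\ge x_n,\ \sum_{i=1}^n x_i^j=s_j\text{ for }j=1,\dots,k-1\}$ with the subspace topology from $\mathbb{R}^n$. *)

From Stdlib Require Import Reals Lra Lia.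
Open Scope R_scope.

(* Points of R^n are encoded as x : nat -> R, using 1-based indices 1..n
   (values outside 1..n are irrelevant). *)

Fixpoint psum (x : nat -> R) (m j : nat) : R :=
  match m with
  | O => 0
  | S m' => psum x m' j + x m ^ j
  end.

Definition inS (k n : nat) (s : nat -> R) (x : nat -> R) : Prop :=
  (forall i : nat, (1 <= i < n)%nat -> x (S i) <= x i) /\
  (forall j : nat, (1 <= j <= k - 1)%nat -> psum x n j = s j).

(* x is a local maximum of y |-> sum_{i=1}^n y_i^k on S_k (subspace topology
   of R^n, neighbourhoods given by sup-norm balls). *)
Definition is_local_max_S (k n : nat) (s : nat -> R) (x : nat -> R) : Prop :=
  inS k n s x /\
  exists eps : R, 0 < eps /\
    forall y : nat -> R, inS k n s y ->
      (forall i : nat, (1 <= i <= n)%nat -> Rabs (y i - x i) < eps) ->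
      psum y n k <= psum x n k.

Definition is_local_min_S (k n : nat) (s : nat -> R) (x : nat -> R) : Prop :=
  inS k n s x /\
  exists eps : R, 0 < eps /\
    forall y : nat -> R, inS k n s y ->
      (forall i : nat, (1 <= i <= n)%nat -> Rabs (y i - x i) < eps) ->
      psum x n k <= psum y n k.

From Stdlib Require Import Reals Lra Lia Classical.
From mathcomp Require all_boot all_order all_algebra zify ring lra Rstruct.
From mathcomp.real_closed Require polyrcf.
Open Scope R_scope.

(* Let x_1 >= ... >= x_k be a point of S_k (here n = k) and G = prod_i ('X - x_i).
   By Newton's identities, shifting the constant coefficient of G by c keeps the
   power sums p_1, ..., p_(k-1) of its roots and lowers p_k by k * c.
   Suppose that every tie x_m = x_(m+1) has an index m of one parity b (so there
   are no triple ties).  For small d > 0 the polynomial G + (-1)^b d still has k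
   real roots y_1 > ... > y_k with y_m close to x_m: simple roots survive by a
   sign change of G, and the sign of G next to a double root x_m = x_(m+1) is
   (-1)^(m+1) = -(-1)^b, so adding (-1)^b d splits it into two real roots.  The
   point y lies in S_k near x and p_k(y) = p_k(x) - (-1)^b k d.  All ties odd
   (b = true) thus contradicts local maximality, all ties even local minimality. *)

Module PowerSumPerturbation.
Import all_boot all_order all_algebra zify ring lra Rstruct polyrcf.
Set Implicit Arguments. Unset Strict Implicit. Unset Printing Implicit Defensive.
Import Order.TTheory GRing.Theory Num.Theory.
Local Open Scope ring_scope.

Section Newton.
Variable R : comNzRingType.
Implicit Types (z : nat -> R).

Definition root_poly z n : {poly R} := \prod_(i < n) ('X - (z i)%:P).

Definition pow_sum z n j : R := \sum_(i < n) z i ^+ j.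

(* cofactor_sum z j n = sum_(i < n) z_i^j * prod_(l < n, l != i) ('X - z_l),
   defined by its recursion in n. *)
Fixpoint cofactor_sum z j n : {poly R} :=
  if n is n'.+1 then
    cofactor_sum z j n' * ('X - (z n')%:P) + z n' ^+ j *: root_poly z n'
  else 0.

Lemma root_polyS z n : root_poly z n.+1 = root_poly z n * ('X - (z n)%:P).
Proof. by rewrite /root_poly big_ord_recr. Qed.

Lemma size_root_poly z n : size (root_poly z n) = n.+1.
Proof.
by rewrite /root_poly size_prod_XsubC /index_enum unlock -enumT size_enum_ord.
Qed.

Lemma root_poly_monic z n : root_poly z n \is monic.
Proof. exact: monic_prod_XsubC. Qed.

Lemma root_poly_lead z n : (root_poly z n)`_n = 1.
Proof.
by have /monicP := root_poly_monic z n; rewrite /lead_coef size_root_poly.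
Qed.

Lemma pow_sum0 z n : pow_sum z n 0 = n%:R.
Proof.
by rewrite /pow_sum (eq_bigr (fun=> 1)) ?sumr_const ?card_ord // => i _; rewrite expr0.
Qed.

Lemma cofactor_sum_top z j n :
  (size (cofactor_sum z j n) <= n)%N /\ (cofactor_sum z j n)`_n.-1 = pow_sum z n j.
Proof.
elim: n => [|n [Hsize Htop]] /=; first by rewrite size_poly0 coef0 /pow_sum big_ord0.
split.
  rewrite (leq_trans (size_polyD _ _)) // geq_max; apply/andP; split.
    rewrite (leq_trans (size_polyMleq _ _)) // size_XsubC addn2 /=.
    by case: (size _) Hsize.
  by rewrite (leq_trans (size_scale_leq _ _)) // size_root_poly.
rewrite coefD coefZ root_poly_lead mulr1 mulrBr coefB coefMC coefMX.
rewrite (nth_default _ Hsize) mul0r subr0 /pow_sum big_ord_recr /=; congr (_ + _).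
by case: n Hsize Htop => [|n] //= _ _; rewrite big_ord0.
Qed.

Definition newton_corr z n j : {poly R} :=
  \sum_(m < j) pow_sum z n m *: 'X^(j.-1 - m).

Lemma XnsubCn (c : R) j :
  'X^j - (c ^+ j)%:P = ('X - c%:P) * \sum_(m < j) c ^+ m *: 'X^(j.-1 - m).
Proof.
rewrite rmorphXn subrXX; congr (_ * _); apply: eq_bigr => i _.
by rewrite -rmorphXn mulrC mul_polyC.
Qed.

(* Since 'X^j - z_i^j is divisible by 'X - z_i, the derivative of the root
   polynomial satisfies  'X^j G' = cofactor_sum + G * newton_corr. *)
Lemma cofactor_sum_deriv z j n :
  'X^j * (root_poly z n)^`() = cofactor_sum z j n + root_poly z n * newton_corr z n j.
Proof.
elim: n => [|n IH].
  rewrite /root_poly big_ord0 derivC mulr0 /= /newton_corr mul1r.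
  by rewrite big1 ?add0r // => i _; rewrite /pow_sum big_ord0 scale0r.
rewrite root_polyS derivM derivXsubC mulr1 /=.
have -> : newton_corr z n.+1 j =
          newton_corr z n j + \sum_(m < j) z n ^+ m *: 'X^(j.-1 - m).
  rewrite /newton_corr -big_split /=; apply: eq_bigr => i _.
  by rewrite /pow_sum big_ord_recr /= scalerDl.
move: (XnsubCn (z n) j) IH.
set T := \sum_(m < j) _; set G := root_poly z n; set L := 'X - (z n)%:P.
move=> HT IH; rewrite -mul_polyC.
have -> : G * L * (newton_corr z n j + T) = G * L * newton_corr z n j + G * (L * T) by ring.
rewrite -HT.
have -> : 'X^j * (G^`() * L + G) = ('X^j * G^`()) * L + 'X^j * G by ring.
rewrite IH; ring.
Qed.

(* Newton's identities, in terms of the coefficients of the root polynomial. *)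
Lemma newton_identity z n j : (j <= n)%N ->
  pow_sum z n j + \sum_(m < j) pow_sum z n m * (root_poly z n)`_(n - j + m) =
  (root_poly z n)`_(n - j) *+ (n - j).
Proof.
case: n => [|n] Hjn.
  have -> : j = 0%N by lia.
  by rewrite big_ord0 /pow_sum big_ord0 addr0 mulr0n.
have := congr1 (fun p : {poly R} => p`_n) (cofactor_sum_deriv z j n.+1).
rewrite coefXnM coefD (proj2 (cofactor_sum_top z j n.+1)) /=.
rewrite /newton_corr mulr_sumr coef_sum => E.
have -> : (root_poly z n.+1)`_(n.+1 - j) *+ (n.+1 - j) = pow_sum z n.+1 j +
   \sum_(i < j) (root_poly z n.+1 * (pow_sum z n.+1 i *: 'X^(j.-1 - i)))`_n.
  rewrite -E; case: ltnP => Hnj; first by have -> : (n.+1 - j = 0)%N by lia.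
  by rewrite coef_deriv; have -> : ((n - j).+1 = n.+1 - j)%N by lia.
congr (_ + _); apply: eq_bigr => i _; have Hi := ltn_ord i.
rewrite -scalerAr coefZ coefMXn; case: ltnP => H; first lia.
by congr (_ * _); congr (_`_ _); lia.
Qed.

Lemma pow_sum_shift z w n c : (0 < n)%N ->
  root_poly w n = root_poly z n + c%:P ->
  (forall j, (j < n)%N -> pow_sum w n j = pow_sum z n j) /\
  pow_sum w n n = pow_sum z n n - c *+ n.
Proof.
move=> Hn Ew.
have Hcoef i : (0 < i)%N -> (root_poly w n)`_i = (root_poly z n)`_i.
  by rewrite Ew coefD coefC; case: i => // i _; rewrite addr0.
have Hlow j : (j < n)%N -> pow_sum w n j = pow_sum z n j.
  elim/ltn_ind: j => j IH Hj.
  have Nw := newton_identity w (ltnW Hj); have Nz := newton_identity z (ltnW Hj).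
  rewrite Hcoef in Nw; last by lia.
  rewrite (eq_bigr (fun m : 'I_j => pow_sum z n m * (root_poly z n)`_(n - j + m))) in Nw.
    by rewrite -Nz in Nw; exact: addIr Nw.
  by move=> i _; have Hi := ltn_ord i; rewrite IH ?Hcoef //; lia.
split=> //.
case: n Hn Ew Hcoef Hlow => // n _ Ew Hcoef Hlow.
have Nw := newton_identity w (leqnn n.+1); have Nz := newton_identity z (leqnn n.+1).
rewrite subnn mulr0n big_ord_recl /= add0n in Nw.
rewrite subnn mulr0n big_ord_recl /= add0n in Nz.
rewrite (eq_bigr (fun i : 'I_n =>
    pow_sum z n.+1 (bump 0 i) * (root_poly z n.+1)`_(bump 0 i))) in Nw; last first.
  by move=> i _; have Hi := ltn_ord i; rewrite Hlow ?Hcoef //; rewrite /bump /=; lia.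
rewrite !pow_sum0 Ew coefD coefC /= in Nw; rewrite pow_sum0 in Nz.
move: Nw Nz; set S := \sum_(i < n) _ => Nw Nz.
have -> : pow_sum w n.+1 n.+1 = - (n.+1%:R * ((root_poly z n.+1)`_0 + c) + S).
  by apply/eqP; rewrite -subr_eq0 opprK Nw.
have -> : pow_sum z n.+1 n.+1 = - (n.+1%:R * (root_poly z n.+1)`_0 + S).
  by apply/eqP; rewrite -subr_eq0 opprK Nz.
by rewrite -mulr_natr; ring.
Qed.

End Newton.

Lemma root_poly_eq (R : fieldType) (p : {poly R}) (z : nat -> R) n :
  p \is monic -> size p = n.+1 -> (forall i, (i < n)%N -> root p (z i)) ->
  {in gtn n &, injective z} -> p = root_poly z n.
Proof.
move=> /monicP p_monic p_size p_roots z_inj.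
have := @all_roots_prod_XsubC _ p [seq z i | i <- iota 0 n].
have -> : iota 0 n = index_iota 0 n by rewrite /index_iota subn0.
rewrite p_monic scale1r big_map big_mkord; apply.
- by rewrite size_map size_iota subn0.
- by apply/allP => _ /mapP [i Hi ->]; apply: p_roots; move: Hi; rewrite mem_index_iota.
- rewrite uniq_rootsE map_inj_in_uniq ?iota_uniq // => i j.
  by rewrite !mem_index_iota => Hi Hj; apply: z_inj.
Qed.

Lemma sign_prod_sub (R : realDomainType) (z : nat -> R) n m t : (m <= n)%N ->
  (forall i, (i < m)%N -> t < z i) -> (forall i, (m <= i < n)%N -> z i < t) ->
  0 < (-1) ^+ m * \prod_(i < n) (t - z i).
Proof.
elim: n m => [|n IH] m Hmn Habove Hbelow.
  by move: Hmn; rewrite leqn0 => /eqP ->; rewrite big_ord0 mulr1 expr0 ltr01.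
rewrite big_ord_recr /=; case: (ltnP n m) => Hnm.
  have Em : m = n.+1 by lia.
  have -> : (-1) ^+ m * ((\prod_(i < n) (t - z i)) * (t - z n)) =
            ((-1) ^+ n * \prod_(i < n) (t - z i)) * (z n - t) by rewrite Em exprS; ring.
  apply: mulr_gt0; last by rewrite subr_gt0 Habove // Em.
  by apply: IH => // i Hi; [apply: Habove; lia | lia].
rewrite mulrA; apply: mulr_gt0; first by apply: IH => // i Hi; apply: Hbelow; lia.
by rewrite subr_gt0 Hbelow //; lia.
Qed.

Lemma step_decreasing_inj (disp : Order.disp_t) (T : porderType disp) (f : nat -> T) n :
  (forall i, (i.+1 < n)%N -> (f i.+1 < f i)%O) -> {in gtn n &, injective f}.
Proof.
move=> f_step.
have D_convex : {in gtn n &, forall a b c, (a < c < b)%N -> c \in gtn n}.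
  by move=> a b + + c; rewrite !inE /=; lia.
have f_dec := Order.NatMonotonyTheory.nhomo_ltn_lt_in D_convex (fun i _ => f_step i).
move=> i j Hi Hj Efij; case: (ltngtP i j) => [Hij | Hij | //].
  by have := f_dec j i Hj Hi Hij; rewrite Efij ltxx.
by have := f_dec i j Hi Hj Hij; rewrite Efij ltxx.
Qed.

Lemma common_lower_bound (R : realFieldType) (P : nat -> R) n :
  (forall i, (i < n)%N -> 0 < P i) -> exists2 d, 0 < d & forall i, (i < n)%N -> d < P i.
Proof.
elim: n => [|n IH] HP; first by exists 1.
have [d d_gt0 Hd] : exists2 d, 0 < d & forall i, (i < n)%N -> d < P i.
  by apply: IH => i Hi; apply: HP; lia.
have Pn_gt0 : 0 < P n by apply: HP.
exists (Num.min d (P n / 2)); first by rewrite lt_min d_gt0 divr_gt0.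
move=> i Hi; rewrite gt_min; case: (ltnP i n) => Hin; first by rewrite Hd.
have -> : i = n by lia.
by apply/orP; right; lra.
Qed.

Section Perturbation.
Variable R : rcfType.
Variable k : nat.
Variable x : nat -> R.
Hypothesis k_gt0 : (0 < k)%N.
Hypothesis x_sorted : forall i, (1 <= i < k)%N -> x i.+1 <= x i.

(* x is indexed from 1; xs is the same point indexed from 0, G its root polynomial. *)
Local Notation xs := (fun i => x i.+1).
Local Notation G := (root_poly xs k).

Lemma x_antitone i j : (1 <= i <= j)%N -> (j <= k)%N -> x j <= x i.
Proof.
move=> Hij Hjk.
have D_convex : {in [pred m | (1 <= m <= k)%N] &, forall a b c, (a < c < b)%N ->
                 c \in [pred m | (1 <= m <= k)%N]}.
  by move=> a b + + c; rewrite !inE; lia.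
apply: (Order.NatMonotonyTheory.nonincn_inP D_convex); rewrite ?inE; try lia.
by move=> m; rewrite !inE => Hm Hm1; apply: x_sorted; lia.
Qed.

Lemma horner_G t : G.[t] = \prod_(i < k) (t - x i.+1).
Proof. by rewrite horner_prod; apply: eq_bigr => i _; rewrite hornerXsubC. Qed.

Lemma G_root m : (1 <= m <= k)%N -> G.[x m] = 0.
Proof.
move=> Hm; have Hm' : (m.-1 < k)%N by lia.
by rewrite horner_G (bigD1 (Ordinal Hm')) //= prednK ?subrr ?mul0r //; lia.
Qed.

Lemma sign_G m t : (m <= k)%N -> (m = 0%N \/ t < x m) -> (m = k \/ x m.+1 < t) ->
  0 < (-1) ^+ m * G.[t].
Proof.
move=> Hmk Habove Hbelow; rewrite horner_G.
apply: (@sign_prod_sub R xs) => // i Hi.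
  case: Habove => [|Habove]; first lia.
  by apply: lt_le_trans Habove _; apply: x_antitone; lia.
case: Hbelow => [|Hbelow]; first lia.
by apply: le_lt_trans _ Hbelow; apply: x_antitone; lia.
Qed.

Definition left_tie m := (1 < m)%N && (x m.-1 == x m).
Definition right_tie m := (m < k)%N && (x m == x m.+1).

Lemma left_tieS m : (1 <= m < k)%N -> left_tie m.+1 = right_tie m.
Proof. by move=> Hm; rewrite /left_tie /right_tie /=; congr (_ && _); lia. Qed.

Definition separated (r : R) :=
  forall m, (1 <= m < k)%N -> x m != x m.+1 -> x m.+1 + r < x m - r.

Lemma separated_radius r0 : 0 < r0 -> exists r, [/\ 0 < r, r < r0 & separated r].
Proof.
move=> r0_gt0.
pose P i := if (i.+2 <= k)%N && (x i.+1 != x i.+2)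
            then Num.min r0 ((x i.+1 - x i.+2) / 2) else r0.
have [r r_gt0 HrP] : exists2 r : R, 0 < r & forall i, (i < k)%N -> r < P i.
  apply: common_lower_bound => i Hi; rewrite /P; case: ifP => // /andP [Hi2 Hne].
  rewrite lt_min r0_gt0 divr_gt0 // subr_gt0 lt_neqAle eq_sym Hne x_sorted //; lia.
exists r; split => //.
  by have := HrP 0%N k_gt0; rewrite /P; case: ifP => // _; rewrite lt_min => /andP [].
move=> m Hm Hne.
have : r < Num.min r0 ((x m - x m.+1) / 2).
  have := HrP m.-1 ltac:(lia); rewrite /P prednK; last lia.
  have -> : (m.+1 <= k)%N by lia.
  by rewrite Hne.
by rewrite lt_min => /andP [_]; lra.
Qed.

Section Windows.
Variable r : R.
Hypothesis r_gt0 : 0 < r.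
Hypothesis r_sep : separated r.

Lemma sign_right m : (1 <= m <= k)%N -> ~~ left_tie m -> 0 < - ((-1) ^+ m * G.[x m + r]).
Proof.
move=> Hm Hfree.
have -> : (-1) ^+ m = - (-1) ^+ m.-1 :> R.
  by case: m Hm {Hfree} => [|m] //= _; rewrite exprS mulN1r.
rewrite mulNr opprK; apply: sign_G; first lia.
- case: (ltnP 1 m) => H1m; last by left; lia.
  right; have Hne : x m.-1 != x m by move: Hfree; rewrite /left_tie H1m.
  have Hm1 : (1 <= m.-1 < k)%N by lia.
  have := r_sep Hm1; rewrite prednK; last lia.
  move=> /(_ Hne) Hsep; apply: lt_trans Hsep _.
  by rewrite ltrBlDr ltrDl.
- by right; rewrite prednK ?ltrDl //; lia.
Qed.

Lemma sign_left m : (1 <= m <= k)%N -> ~~ right_tie m -> 0 < (-1) ^+ m * G.[x m - r].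
Proof.
move=> Hm Hfree; apply: sign_G; [lia | by right; rewrite ltrBlDr ltrDl |].
case: (ltnP m k) => Hmk; last by left; lia.
right; have Hne : x m != x m.+1 by move: Hfree; rewrite /right_tie Hmk.
have Hm' : (1 <= m < k)%N by lia.
by apply: lt_trans (r_sep Hm' Hne); rewrite ltrDl.
Qed.

Lemma window_depth : exists2 d : R, 0 < d & forall m, (1 <= m <= k)%N ->
  (~~ left_tie m -> d < - ((-1) ^+ m * G.[x m + r])) /\
  (~~ right_tie m -> d < (-1) ^+ m * G.[x m - r]).
Proof.
pose P i := Num.min (if left_tie i.+1 then 1 else - ((-1) ^+ i.+1 * G.[x i.+1 + r]))
                    (if right_tie i.+1 then 1 else (-1) ^+ i.+1 * G.[x i.+1 - r]).
have [d d_gt0 HdP] : exists2 d : R, 0 < d & forall i, (i < k)%N -> d < P i.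
  apply: common_lower_bound => i Hi; rewrite /P lt_min.
  by apply/andP; split; case: ifPn => // Hfree; [apply: sign_right | apply: sign_left]; lia.
exists d => // m Hm; have := HdP m.-1 ltac:(lia); rewrite /P prednK; last lia.
by rewrite lt_min => /andP [Hl Hr]; split => Hfree; move: Hl Hr; rewrite (negbTE Hfree).
Qed.

Section Perturbed.
Variables (b : bool) (d : R).
Hypothesis tie_parity : forall m, (1 <= m < k)%N -> x m = x m.+1 -> odd m = b.
Hypothesis d_gt0 : 0 < d.
Hypothesis d_below : forall m, (1 <= m <= k)%N ->
  (~~ left_tie m -> d < - ((-1) ^+ m * G.[x m + r])) /\
  (~~ right_tie m -> d < (-1) ^+ m * G.[x m - r]).

Local Notation c := ((-1) ^+ b * d).
Local Notation Pol := (G + c%:P).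

(* The window around x_m in which the m-th root of Pol is sought: a root
   tied with its neighbour is split, the larger copy moving up. *)
Definition lo m := if right_tie m then x m else x m - r.
Definition hi m := if left_tie m then x m else x m + r.

Lemma window_around m : [/\ x m - r <= lo m, lo m <= x m, x m <= hi m & hi m <= x m + r].
Proof.
have r_ge0 : 0 <= r := ltW r_gt0.
by rewrite /lo /hi; split; case: ifP => _; rewrite ?lexx ?gerBl ?lerDl.
Qed.

Lemma sign_c m : (-1) ^+ m * c = if odd m == b then d else - d.
Proof.
rewrite mulrA -signr_odd -signr_addb.
by case: (odd m); case: b; rewrite /= ?expr0 ?expr1 ?mul1r ?mulN1r.
Qed.

(* Pol has sign (-1)^m at the lower end of the m-th window: at an untied
   end because |c| = d is smaller than |G|, at a right tie x_m = x_(m+1)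
   (where m has parity b) because G vanishes there and c has sign (-1)^m. *)
Lemma sign_Pol_lo m : (1 <= m <= k)%N -> 0 < (-1) ^+ m * Pol.[lo m].
Proof.
move=> Hm; rewrite hornerD hornerC mulrDr sign_c /lo.
case: ifPn => Htie.
  move: (Htie); rewrite /right_tie => /andP [Hmk /eqP Etie].
  by rewrite G_root ?mulr0 ?add0r ?tie_parity ?eqxx //; lia.
have Hd := (d_below Hm).2 Htie.
case: eqP => _; last by rewrite subr_gt0.
exact: addr_gt0 (lt_trans d_gt0 Hd) d_gt0.
Qed.

(* Pol has sign -(-1)^m at the upper end of the m-th window, for the same
   reasons (a left tie x_(m-1) = x_m has m-1 of parity b). *)
Lemma sign_Pol_hi m : (1 <= m <= k)%N -> (-1) ^+ m * Pol.[hi m] < 0.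
Proof.
move=> Hm; rewrite hornerD hornerC mulrDr sign_c /hi.
case: ifPn => Htie.
  move: (Htie); rewrite /left_tie => /andP [H1m /eqP Etie].
  have Hodd : odd m.-1 = b by apply: tie_parity; rewrite ?prednK //; lia.
  have -> : odd m = ~~ b by rewrite -Hodd -[in LHS](prednK (_ : 0 < m)%N) //; lia.
  have -> : (~~ b == b) = false by case: b {Hodd}.
  by rewrite G_root // mulr0 add0r oppr_lt0.
move: (d_below Hm).1 => /(_ Htie); rewrite ltrNr => Hd.
case: eqP => _; first by rewrite -[d]opprK subr_lt0.
by rewrite subr_lt0; apply: lt_trans Hd (gtrN d_gt0).
Qed.

Lemma window_root m : (1 <= m <= k)%N -> {y | y \in `]lo m, hi m[ & root Pol y}.
Proof.
move=> Hm; have [_ Hlo Hhi _] := window_around m.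
apply: poly_ivtoo; first exact: le_trans Hlo Hhi.
have -> : Pol.[lo m] * Pol.[hi m] =
          ((-1) ^+ m * Pol.[lo m]) * ((-1) ^+ m * Pol.[hi m]).
  by rewrite mulrACA -expr2 sqrr_sign mul1r.
by rewrite pmulr_rlt0 ?sign_Pol_lo ?sign_Pol_hi.
Qed.

Lemma window_step m : (1 <= m < k)%N -> hi m.+1 <= lo m.
Proof.
move=> Hm; rewrite /hi /lo left_tieS //; case: ifPn => Htie.
  by move: Htie => /andP [_ /eqP ->].
have Hne : x m != x m.+1 by move: Htie; rewrite /right_tie (_ : (m < k)%N) //; lia.
by have := r_sep Hm Hne; lra.
Qed.

Lemma perturbed_roots : exists y : nat -> R,
  [/\ forall m, (1 <= m <= k)%N -> x m - r < y m < x m + r,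
      forall m, (1 <= m < k)%N -> y m.+1 < y m
    & root_poly (fun i => y i.+1) k = Pol].
Proof.
have [y Hy] : exists y : nat -> R, forall m, (1 <= m <= k)%N ->
    lo m < y m < hi m /\ root Pol (y m).
  exists (fun m => if (1 <= m <= k)%N =P true is ReflectT Hm
                   then sval (window_root Hm) else 0).
  move=> m Hm; case: eqP => // Hm'; case: (window_root Hm') => y /=.
  by rewrite in_itv /=.
have y_step m : (1 <= m < k)%N -> y m.+1 < y m.
  move=> Hm; have [/andP [_ Hhi] _] := Hy m.+1 ltac:(lia).
  have [/andP [Hlo _] _] := Hy m ltac:(lia).
  by apply: lt_trans Hhi _; apply: le_lt_trans (window_step Hm) Hlo.
exists y; split => //.
  move=> m Hm; have [/andP [Hlo Hhi] _] := Hy m Hm; have [Hr_lo _ _ Hhi_r] := window_around m.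
  by rewrite (le_lt_trans Hr_lo Hlo) (lt_le_trans Hhi Hhi_r).
have Hsize : (size (c%:P) < size G)%N.
  by rewrite size_root_poly ltnS (leq_trans (size_polyC_leq1 _)).
symmetry; apply: root_poly_eq.
- by rewrite monicE lead_coefDl // -monicE root_poly_monic.
- by rewrite size_polyDl // size_root_poly.
- by move=> i Hi; apply: (Hy i.+1 _).2; lia.
by apply: step_decreasing_inj => i Hi; apply: y_step; lia.
Qed.
End Perturbed.
End Windows.

Lemma perturbed_point (b : bool) (r0 : R) : 0 < r0 ->
  (forall m, (1 <= m < k)%N -> x m = x m.+1 -> odd m = b) ->
  exists y : nat -> R,
  [/\ forall m, (1 <= m < k)%N -> y m.+1 <= y m,
      forall m, (1 <= m <= k)%N -> `|y m - x m| < r0,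
      forall j, (j < k)%N -> pow_sum (fun i => y i.+1) k j = pow_sum xs k j
    & if b then pow_sum xs k k < pow_sum (fun i => y i.+1) k k
      else pow_sum (fun i => y i.+1) k k < pow_sum xs k k].
Proof.
move=> r0_gt0 tie_parity.
have [r [r_gt0 r_lt_r0 r_sep]] := separated_radius r0_gt0.
have [d d_gt0 d_below] := window_depth r_gt0 r_sep.
have [y [y_near y_step y_poly]] := perturbed_roots r_gt0 r_sep tie_parity d_gt0 d_below.
have [same_low shifted_top] := pow_sum_shift k_gt0 y_poly.
exists y; split => //.
- by move=> m Hm; apply/ltW/y_step.
- move=> m Hm; have /andP [Hlo Hhi] := y_near m Hm.
  by rewrite ltr_norml; apply/andP; split; lra.
- have Hdk : 0 < d *+ k by rewrite pmulrn_lgt0.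
  move: shifted_top; rewrite mulr_sign.
  by case: b {tie_parity y_poly} => /= ->; rewrite ?mulNrn; lra.
Qed.
End Perturbation.

Lemma psum_pow_sum (x : nat -> R) m j : psum x m j = pow_sum (fun i => x i.+1) m j.
Proof.
elim: m => [|m IH] /=; first by rewrite /pow_sum big_ord0.
by rewrite IH RpowE /pow_sum big_ord_recr.
Qed.

Lemma perturbation_in_S (k : nat) (s x : nat -> R) (b : bool) (eps : R) :
  (0 < k)%N -> inS k k s x -> Rlt 0 eps ->
  (forall m, (1 <= m < k)%N -> x m = x m.+1 -> odd m = b) ->
  exists y, [/\ inS k k s y,
    forall i, (1 <= i)%coq_nat /\ (i <= k)%coq_nat -> Rlt (Rabs (Rminus (y i) (x i))) eps
    & if b then Rlt (psum x k k) (psum y k k) else Rlt (psum y k k) (psum x k k)].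
Proof.
move=> k_gt0 [x_sorted x_sums] /RltP eps_gt0 tie_parity.
have x_sorted' i : (1 <= i < k)%N -> x i.+1 <= x i.
  by move=> /andP [H1 H2]; apply/RleP/x_sorted; split; apply/ssrnat.leP.
have [y [y_sorted y_near y_sums y_top]] :=
  perturbed_point k_gt0 x_sorted' eps_gt0 tie_parity.
exists y; split.
- split=> [i [H1 H2] | j [H1 H2]].
    by apply/RleP/y_sorted; apply/andP; split; apply/ssrnat.leP.
  rewrite psum_pow_sum y_sums -?psum_pow_sum; first exact: x_sums.
  by apply/ssrnat.ltP; lia.
- by move=> i [H1 H2]; apply/RltP/y_near; apply/andP; split; apply/ssrnat.leP.
- by rewrite !psum_pow_sum; case: b {tie_parity y_top} (y_top) => /= H; apply/RltP.
Qed.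

(* At a local maximum on S_k some tie x_(2i) = x_(2i+1) occurs: otherwise all
   ties have odd index and the k-th power sum could be increased nearby. *)
Lemma local_max_even_tie (k : nat) (s x : nat -> R) : (0 < k)%coq_nat ->
  is_local_max_S k k s x ->
  exists i : nat, (1 <= 2 * i)%coq_nat /\ (2 * i < 2 * i + 1)%coq_nat /\
    (2 * i + 1 <= k)%coq_nat /\ x (2 * i)%coq_nat = x (2 * i + 1)%coq_nat.
Proof.
move=> /ssrnat.ltP k_gt0 [x_in [eps [eps_gt0 x_max]]]; apply: NNPP => no_even_tie.
have ties_odd m : (1 <= m < k)%N -> x m = x m.+1 -> odd m = true.
  move=> Hm Etie; case Hodd: (odd m) => //; case: no_even_tie; exists m./2.
  have := odd_double_half m; rewrite Hodd add0n => Em.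
  have -> : (2 * m./2)%coq_nat = m by lia.
  have -> : (2 * m./2 + 1)%coq_nat = m.+1 by lia.
  by do 3 (split; first lia).
have [y [y_in y_near y_larger]] := perturbation_in_S k_gt0 x_in eps_gt0 ties_odd.
exact: Rlt_not_le y_larger (x_max y y_in y_near).
Qed.

(* At a local minimum on S_k some tie x_(2i-1) = x_(2i) occurs: otherwise all
   ties have even index and the k-th power sum could be decreased nearby. *)
Lemma local_min_odd_tie (k : nat) (s x : nat -> R) : (0 < k)%coq_nat ->
  is_local_min_S k k s x ->
  exists i : nat, (1 <= 2 * i - 1)%coq_nat /\ (2 * i - 1 < 2 * i)%coq_nat /\
    (2 * i <= k)%coq_nat /\ x (2 * i - 1)%coq_nat = x (2 * i)%coq_nat.
Proof.
move=> /ssrnat.ltP k_gt0 [x_in [eps [eps_gt0 x_min]]]; apply: NNPP => no_odd_tie.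
have ties_even m : (1 <= m < k)%N -> x m = x m.+1 -> odd m = false.
  move=> Hm Etie; case Hodd: (odd m) => //; case: no_odd_tie; exists (m./2).+1.
  have := odd_double_half m; rewrite Hodd => Em.
  have -> : (2 * (m./2).+1 - 1)%coq_nat = m by lia.
  have -> : (2 * (m./2).+1)%coq_nat = m.+1 by lia.
  by do 3 (split; first lia).
have [y [y_in y_near y_smaller]] := perturbation_in_S k_gt0 x_in eps_gt0 ties_even.
exact: Rlt_not_le y_smaller (x_min y y_in y_near).
Qed.

End PowerSumPerturbation.

Theorem mainTheorem13 (k : nat) (s : nat -> R) (x : nat -> R) :
  (3 <= k)%nat ->
  (is_local_max_S k k s x ->
     exists i : nat, (1 <= 2 * i)%nat /\ (2 * i < 2 * i + 1)%nat /\
       (2 * i + 1 <= k)%nat /\ x (2 * i)%nat = x (2 * i + 1)%nat) /\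
  (is_local_min_S k k s x ->
     exists i : nat, (1 <= 2 * i - 1)%nat /\ (2 * i - 1 < 2 * i)%nat /\
       (2 * i <= k)%nat /\ x (2 * i - 1)%nat = x (2 * i)%nat).
Proof.
intros Hk; split.
- apply PowerSumPerturbation.local_max_even_tie; lia.
- apply PowerSumPerturbation.local_min_odd_tie; lia.
Qed.
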